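(* Let $R$ be an associative unital division ring over a field $F$ of characteristic $0$, let $\alpha\in F\setminus\{0\}$, $\lambda,\mu\in F$, and let $N,r,s$ be integers with $N>3$ and $1\leq r<s\leq\lfloor N/2\rfloor$. Let $y_M\in R$ be invertible and $\varphi_M\in R$ for $M\in\mathbb{Z}$, and set $\theta_{l,m,n}=y_{(N-s)l+sm+rn}$, $\psi_{l,m,n}=\varphi_{(N-s)l+sm+rn}$ for $(l,m,n)\in\mathbb{Z}^3$. Let $S=\{(N-s)l+sm+rn:(l,m,n)\in\mathbb{Z}^3\}$. (i) For each $(l,m,n)$, with $M=(N-s)l+sm+rn$, the equation $$\theta_{l+1,m+1,n}=\alpha^2\theta_{l,m,n+1}+\theta_{l+1,m,n}\bigl(\theta_{l,m,n}^{-1}-\alpha^2\theta_{l+1,m+1,n-1}^{-1}\bigr)\theta_{l,m+1,n}$$ holds if and only if $$y_{M+N}=\alpha^2y_{M+r}+y_{M+N-s}\bigl(y_M^{-1}-\alpha^2y_{M+N-r}^{-1}\bigr)y_{M+s}.$$ (ii) If for all $(l,m,n)\in\mathbb{Z}^3$ $$\psi_{l+1,m,n}=\mu\psi_{l,m,n+1}+a_{l,m,n}\psi_{l,m,n},\qquad \lambda\psi_{l,m-1,n+1}=\mu\psi_{l,m,n+1}+b_{l,m,n}\psi_{l,m,n},$$ where $a_{l,m,n}=\alpha^{-1}\theta_{l+1,m,n}\theta_{l,m,n}^{-1}$ and $b_{l,m,n}=\alpha\theta_{l,m-1,n+1}\theta_{l,m,n}^{-1}$, then for all $M\in S$ $$\varphi_{M+N-s}=\mu\varphi_{M+r}+a_M\varphi_M,\qquad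 \lambda\varphi_M=\mu\varphi_{M+s}+b_M\varphi_{M+s-r},$$ with $a_M=\alpha^{-1}y_{M+N-s}y_M^{-1}$ and $b_M=\alpha\,y_My_{M+s-r}^{-1}$. *)

From mathcomp Require Import all_boot all_order all_algebra.
Set Implicit Arguments. Unset Strict Implicit. Unset Printing Implicit Defensive.
Import Order.TTheory GRing.Theory Num.Theory.
Local Open Scope ring_scope.

Definition lat3 {T : Type} (N s r : int) (f : int -> T) (l m n : int) : T :=
  f ((N - s) * l + s * m + r * n).

From mathcomp Require Import all_boot all_order all_algebra.
From mathcomp Require Import ring.
Import Order.TTheory GRing.Theory Num.Theory.
Local Open Scope ring_scope.

(* The map (l, m, n) |-> (N - s) l + s m + r n is additive and sends the unit
   steps of Z^3 to N - s, s and r, and theta, psi are y, phi composed with it.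
   Each lattice equation is therefore the one-dimensional equation at the image
   M of its base point; the b-equation is read at (l, m + 1, n - 1), whose image
   is M + s - r.  Only this reindexing is involved. *)

Lemma lat3_at {T : Type} {N s r : int} {f : int -> T} (l m n k : int) :
  (N - s) * l + s * m + r * n = k -> lat3 N s r f l m n = f k.
Proof. by move <-. Qed.

Section LatticeReduction.

Variables (F : unitRingType) (R : unitAlgType F).
Variables (alpha lambda mu : F) (N r s : int) (y phi : int -> R).

Local Notation theta := (lat3 N s r y).
Local Notation psi := (lat3 N s r phi).

Lemma lat3_relation_iff (l m n : int) :
  let M := (N - s) * l + s * m + r * n in
  theta (l + 1) (m + 1) n =
    alpha ^+ 2 *: theta l m (n + 1)
    + theta (l + 1) m n * ((theta l m n)^-1 - alpha ^+ 2 *: (theta (l + 1) (m + 1) (n - 1))^-1)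
      * theta l (m + 1) n
  <->
  y (M + N) =
    alpha ^+ 2 *: y (M + r)
    + y (M + N - s) * ((y M)^-1 - alpha ^+ 2 *: (y (M + N - r))^-1) * y (M + s).
Proof.
move=> M.
rewrite !(lat3_at (l + 1) (m + 1) n (M + N)) ?(lat3_at l m (n + 1) (M + r))
  ?(lat3_at (l + 1) m n (M + N - s)) ?(lat3_at l m n M)
  ?(lat3_at (l + 1) (m + 1) (n - 1) (M + N - r)) ?(lat3_at l (m + 1) n (M + s)) //.
all: by rewrite /M; ring.
Qed.

Lemma lat3_a_equation_iff (l m n : int) :
  let M := (N - s) * l + s * m + r * n in
  psi (l + 1) m n = mu *: psi l m (n + 1)
                    + alpha^-1 *: (theta (l + 1) m n * (theta l m n)^-1) * psi l m n
  <->
  phi (M + N - s) = mu *: phi (M + r) + alpha^-1 *: (y (M + N - s) * (y M)^-1) * phi M.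
Proof.
move=> M.
rewrite !(lat3_at (l + 1) m n (M + N - s)) ?(lat3_at l m (n + 1) (M + r))
  ?(lat3_at l m n M) //.
all: by rewrite /M; ring.
Qed.

Lemma lat3_b_equation_iff (l m n : int) :
  let M := (N - s) * l + s * m + r * n in
  lambda *: psi l (m + 1 - 1) (n - 1 + 1)
    = mu *: psi l (m + 1) (n - 1 + 1)
      + alpha *: (theta l (m + 1 - 1) (n - 1 + 1) * (theta l (m + 1) (n - 1))^-1)
        * psi l (m + 1) (n - 1)
  <->
  lambda *: phi M = mu *: phi (M + s) + alpha *: (y M * (y (M + s - r))^-1) * phi (M + s - r).
Proof.
move=> M.
rewrite !(lat3_at l (m + 1 - 1) (n - 1 + 1) M) ?(lat3_at l (m + 1) (n - 1 + 1) (M + s))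
  ?(lat3_at l (m + 1) (n - 1) (M + s - r)) //.
all: by rewrite /M; ring.
Qed.

End LatticeReduction.

Theorem proposition6p1
  (F : fieldType) (R : unitAlgType F)
  (charF0 : [pchar F] =i pred0)
  (divR : forall x : R, x != 0 -> x \is a GRing.unit)
  (alpha lambda mu : F) (halpha : alpha != 0)
  (N r s : int) (hN : 3 < N) (hr : 1 <= r) (hrs : r < s) (hs : s <= (N %/ 2)%Z)
  (y phi : int -> R) (hy : forall M, y M \is a GRing.unit) :
  let theta := lat3 N s r y in
  let psi := lat3 N s r phi in
  (* (i) *)
  (forall l m n : int,
     let M := (N - s) * l + s * m + r * n in
     theta (l + 1) (m + 1) n =
       alpha ^+ 2 *: theta l m (n + 1)
       + theta (l + 1) m n * ((theta l m n)^-1 - alpha ^+ 2 *: (theta (l + 1) (m + 1) (n - 1))^-1)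
         * theta l (m + 1) n
     <->
     y (M + N) =
       alpha ^+ 2 *: y (M + r)
       + y (M + N - s) * ((y M)^-1 - alpha ^+ 2 *: (y (M + N - r))^-1) * y (M + s))
  /\
  (* (ii) *)
  ((forall l m n : int,
      let a := alpha^-1 *: (theta (l + 1) m n * (theta l m n)^-1) in
      let b := alpha *: (theta l (m - 1) (n + 1) * (theta l m n)^-1) in
      psi (l + 1) m n = mu *: psi l m (n + 1) + a * psi l m n /\
      lambda *: psi l (m - 1) (n + 1) = mu *: psi l m (n + 1) + b * psi l m n) ->
   forall M : int, (exists l m n : int, M = (N - s) * l + s * m + r * n) ->
      let aM := alpha^-1 *: (y (M + N - s) * (y M)^-1) in
      let bM := alpha *: (y M * (y (M + s - r))^-1) in
      phi (M + N - s) = mu *: phi (M + r) + aM * phi M /\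
      lambda *: phi M = mu *: phi (M + s) + bM * phi (M + s - r)).
Proof.
move=> theta psi; split=> [l m n | lattice_eqs _ [l [m [n ->]]] aM bM].
  exact: lat3_relation_iff.
split.
- by apply/lat3_a_equation_iff; case: (lattice_eqs l m n).
- by apply/lat3_b_equation_iff; case: (lattice_eqs l (m + 1) (n - 1)).
Qed.
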